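(* Consider three CDNs, $CDN_1,CDN_2,CDN_3$, with performance parameters $0\le\beta_1<\beta_2<\beta_3<1$, competing by prices in the model described in the context. Let $(w_1^*,w_2^*,w_3^* )$ be a Nash equilibrium in prices at which each of the three CDNs attracts a set of content providers of positive measure, and let $\Lambda_k^*$ and $J_k^*$ denote the equilibrium number of content providers and revenue of $CDN_k$. Then $$\Lambda_1^*>\Lambda_2^*>2\Lambda_3^*,\qquad w_1^*>1.5\,w_2^*>3\,w_3^*,$$ and consequently the revenue of $CDN_2$ is at least four times that of $CDN_3$, the revenue of $CDN_1$ is at least six times that of $CDN_3$, and $J_1^*>1.5\,J_2^*>6\,J_3^*$.
   Context: Each $CDN_k$ ($k=1,2,3$) has a fixed performance parameter $\beta_k\in[0,1)$ and announces a price $w_k\ge0$. There is a continuum of content providers of total mass $\Lambda>0$ whose sensitivity parameters $\theta$ are uniformly distributed on $[0,1]$. A content provider with sensitivity $\theta$ that hires $CDN_k$ obtains payoff $U(\theta,k)=\theta(1-\beta_k)-w_k$; hiring no CDN gives payoff $0$. Each content provider hires at most one CDN and chooses an option of maximum payoff (indifferent providers form a set of measure zero). $\Lambda_k(w_1,w_2,w_3)$ is $\Lambda$ times the measure of the set of $\theta\in[0,1]$ choosing $CDN_k$, and the revenue of $CDN_k$ is $J_k=\Lambda_k w_k$. A Nash equilibrium is a price vector $(w_1^*,w_2^*,w_3^* )$ such that no $CDN_k$ can increase $J_k$ by changing only its own price $w_k\ge0$. *)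

From HB Require Import structures.
From mathcomp Require Import all_boot all_order all_algebra.
From mathcomp Require Import all_classical all_reals all_analysis.
Set Implicit Arguments. Unset Strict Implicit. Unset Printing Implicit Defensive.
Import Order.TTheory GRing.Theory Num.Theory.
Local Open Scope classical_set_scope.
Local Open Scope ring_scope.

Definition cdn1 : 'I_3 := @Ordinal 3 0 isT.
Definition cdn2 : 'I_3 := @Ordinal 3 1 isT.
Definition cdn3 : 'I_3 := @Ordinal 3 2 isT.

Section Model.
Variable R : realType.

Definition payoff (beta w : 'I_3 -> R) (theta : R) (k : 'I_3) : R :=
  theta * (1 - beta k) - w k.

(* content providers theta in [0,1] choosing CDN_k: k gives a strictly larger
   payoff than every other CDN and than hiring none (ties form a null set). *)
Definition choosers (beta w : 'I_3 -> R) (k : 'I_3) : set R :=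
  [set theta | 0 <= theta <= 1 /\ 0 < payoff beta w theta k /\
     forall j : 'I_3, j != k -> payoff beta w theta j < payoff beta w theta k].

Definition demand (Lam : R) (beta w : 'I_3 -> R) (k : 'I_3) : R :=
  Lam * fine (lebesgue_measure (choosers beta w k)).

Definition revenue (Lam : R) (beta w : 'I_3 -> R) (k : 'I_3) : R :=
  demand Lam beta w k * w k.

Definition set_price (w : 'I_3 -> R) (k : 'I_3) (p : R) : 'I_3 -> R :=
  fun j => if j == k then p else w j.

Definition nash_eq (Lam : R) (beta w : 'I_3 -> R) : Prop :=
  (forall k, 0 <= w k) /\
  forall (k : 'I_3) (p : R), 0 <= p ->
    revenue Lam beta (set_price w k p) k <= revenue Lam beta w k.

End Model.

From mathcomp Require Import all_boot all_order all_algebra.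
From mathcomp Require Import all_classical all_reals all_analysis.
From mathcomp Require Import ring lra.
Import Order.TTheory GRing.Theory Num.Theory numFieldNormedType.Exports.
Local Open Scope classical_set_scope.
Local Open Scope ring_scope.

(** The providers hiring CDN_3, CDN_2 and CDN_1 form consecutive intervals of
    sensitivities, cut at three indifference points that are affine in the
    prices.  When all three intervals are nonempty they stay so under small
    price changes, so each CDN's revenue is locally a concave quadratic in its
    own price, and the equilibrium first-order condition says that its market
    share equals its price times the rate at which that share falls with the
    price.  In terms of the reciprocals of the performance gaps, the conditions
    of CDN_3 and CDN_2 and the positivity of the cut between them force
    [w_2 > 2 w_3] and [w_1 > 2 w_2]; the share and revenue inequalities follow. *)

Lemma quadratic_local_max (R : realFieldType) (c B w : R) : 0 < c -> 0 < B -> 0 <= w ->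
  (\forall p \near w, 0 <= p -> p * (c - B * (p - w)) <= w * c) -> c = B * w.
Proof.
move=> c_gt0 B_gt0 w_ge0 wmax; apply/eqP; apply: contraT => c_neq.
set q := (c - B * w) / B.
have q_neq0 : q != 0 by rewrite mulf_eq0 invr_eq0 subr_eq0 negb_or c_neq gt_eqF.
have q_gt : - w < q by rewrite ltr_pdivlMr //; lra.
have to_w : w + t * q @[t --> 0^'+] --> w.
  apply: cvg_at_right_filter; rewrite -[X in _ --> X]addr0.
  apply: cvgD; first exact: cvg_cst.
  suff : t * q @[t --> 0] --> 0 * q by rewrite mul0r.
  by apply: cvgM; [exact: cvg_id | exact: cvg_cst].
near (0 : R)^'+ => t.
have t_gt0 : 0 < t by near: t; exact: nbhs_right_gt.
have t_lt1 : t < 1 by near: t; exact: nbhs_right_lt.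
have tmax : 0 <= w + t * q -> (w + t * q) * (c - B * (w + t * q - w)) <= w * c.
  by near: t; exact: (to_w _ wmax).
(* A step of [t q] in the direction of the derivative [c - B w] gains [t (1 - t) B q^2]. *)
have gain : (w + t * q) * (c - B * (w + t * q - w)) - w * c = t * (1 - t) * B * q ^+ 2.
  by rewrite /q; field; rewrite gt_eqF.
have q2_gt0 : 0 < q ^+ 2 by rewrite exprn_even_gt0.
have : 0 < t * (1 - t) * B * q ^+ 2 by rewrite mulr_gt0 // !mulr_gt0 // subr_gt0.
have p_ge0 : 0 <= w + t * q by nra.
have := tmax p_ge0; lra.
Unshelve. all: by end_near.
Qed.

Lemma ord3P (j : 'I_3) : [\/ j = cdn1, j = cdn2 | j = cdn3].
Proof.
by case: j => [[|[|[|]]] // ?]; [constructor 1 | constructor 2 | constructor 3];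
  apply/val_inj.
Qed.

Lemma forall_ord3 (P : 'I_3 -> Prop) :
  (forall j, P j) <-> [/\ P cdn1, P cdn2 & P cdn3].
Proof. by split=> [|[? ? ?] j]; [|case: (ord3P j) => ->]. Qed.

Lemma demand_gt0_chooser {R : realType} {Lam : R} {beta w k} :
  0 < demand Lam beta w k -> exists t, choosers beta w k t.
Proof.
rewrite /demand => D_gt0; apply/set0P; apply: contraTneq D_gt0 => ->.
by rewrite measure0 mulr0 ltxx.
Qed.

Lemma near_lt_cvg {R : realFieldType} {T : Type} {F : set_system T} {FF : Filter F}
    {f g : T -> R} {a b : R} :
  f x @[x --> F] --> a -> g x @[x --> F] --> b -> a < b -> \forall x \near F, f x < g x.
Proof.
move=> fa gb ab; near=> x; rewrite -subr_gt0; near: x.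
by apply: (cvgr_gt _ (cvgB gb fa)); rewrite subr_gt0.
Unshelve. all: by end_near.
Qed.

Section Market.
Context {R : realType} {beta : 'I_3 -> R}.
Hypotheses (beta12 : beta cdn1 < beta cdn2) (beta23 : beta cdn2 < beta cdn3)
  (beta3 : beta cdn3 < 1).

Let gaps_gt0 :
  [/\ 0 < 1 - beta cdn3, 0 < beta cdn3 - beta cdn2 & 0 < beta cdn2 - beta cdn1].
Proof. by rewrite !subr_gt0. Qed.

(* [theta3 v], [theta2 v], [theta1 v] are the sensitivities at which a provider
   is indifferent between no CDN and CDN_3, CDN_3 and CDN_2, CDN_2 and CDN_1. *)
Definition theta3 (v : 'I_3 -> R) := v cdn3 / (1 - beta cdn3).
Definition theta2 (v : 'I_3 -> R) := (v cdn2 - v cdn3) / (beta cdn3 - beta cdn2).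
Definition theta1 (v : 'I_3 -> R) := (v cdn1 - v cdn2) / (beta cdn2 - beta cdn1).

Lemma payoff3E v t : payoff beta v t cdn3 = (t - theta3 v) * (1 - beta cdn3).
Proof. by have [? ? ?] := gaps_gt0; rewrite /payoff /theta3; field; rewrite gt_eqF. Qed.

Lemma payoff2E v t :
  payoff beta v t cdn2 = payoff beta v t cdn3 + (t - theta2 v) * (beta cdn3 - beta cdn2).
Proof. by have [? ? ?] := gaps_gt0; rewrite /payoff /theta2; field; rewrite gt_eqF. Qed.

Lemma payoff1E v t :
  payoff beta v t cdn1 = payoff beta v t cdn2 + (t - theta1 v) * (beta cdn2 - beta cdn1).
Proof. by have [? ? ?] := gaps_gt0; rewrite /payoff /theta1; field; rewrite gt_eqF. Qed.

Definition cuts_sorted (v : 'I_3 -> R) :=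
  [/\ theta3 v < theta2 v, theta2 v < theta1 v & theta1 v < 1].

Lemma choosers_sorted {v} : 0 <= v cdn3 -> cuts_sorted v ->
  [/\ choosers beta v cdn3 = [set` `]theta3 v, theta2 v[],
      choosers beta v cdn2 = [set` `]theta2 v, theta1 v[]
    & choosers beta v cdn1 = [set` `]theta1 v, 1]]].
Proof.
move=> v3_ge0 [s32 s21 s1].
have [a_gt0 d2_gt0 d1_gt0] := gaps_gt0.
have th3_ge0 : 0 <= theta3 v by rewrite divr_ge0 // ltW.
rewrite /choosers; split; apply/seteqP; split => t /=;
  rewrite in_itv /= forall_ord3 /= ?payoff1E ?payoff2E ?payoff3E.
- by case=> _ [? [/(_ isT) ? /(_ isT) ? _]]; apply/andP; split; nra.
- by case/andP=> ? ?; do !split => //; nra.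
- by case=> _ [? [/(_ isT) ? _ /(_ isT) ?]]; apply/andP; split; nra.
- by case/andP=> ? ?; do !split => //; nra.
- by case=> /andP[_ ?] [? [_ /(_ isT) ? _]]; apply/andP; split; nra.
- by case/andP=> ? ?; do !split => //; nra.
Qed.

Definition share (v : 'I_3 -> R) (k : 'I_3) : R :=
  if k == cdn3 then theta2 v - theta3 v
  else if k == cdn2 then theta1 v - theta2 v
  else 1 - theta1 v.

Lemma demand_share Lam v k : 0 <= v cdn3 -> cuts_sorted v ->
  demand Lam beta v k = Lam * share v k.
Proof.
move=> v3_ge0 sorted_v; have [C3 C2 C1] := choosers_sorted v3_ge0 sorted_v.
case: sorted_v => s32 s21 s1.
by case: (ord3P k) => ->;
  rewrite /demand /share /= ?C1 ?C2 ?C3 lebesgue_measure_itv /= lte_fin ?s32 ?s21 ?s1.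
Qed.

Lemma cuts_sorted_demand {Lam v} : (forall k, 0 < demand Lam beta v k) -> cuts_sorted v.
Proof.
move=> D_gt0; have [a_gt0 d2_gt0 d1_gt0] := gaps_gt0.
have [t3 [_ [P3 /(_ cdn2 isT) P23]]] := demand_gt0_chooser (D_gt0 cdn3).
have [t2 [_ [_ /forall_ord3[/(_ isT) P21 _ /(_ isT) P32]]]] := demand_gt0_chooser (D_gt0 cdn2).
have [t1 [/andP[_ t1_le1] [_ /(_ cdn2 isT) P12]]] := demand_gt0_chooser (D_gt0 cdn1).
move: P3 P23 P21 P32 P12; rewrite ?payoff1E ?payoff2E ?payoff3E => P3 P23 P21 P32 P12.
have : theta3 v < t3 by nra.
have : t3 < theta2 v by nra.
have : theta2 v < t2 by nra.
have : t2 < theta1 v by nra.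
have : theta1 v < t1 by nra.
by split; lra.
Qed.

Lemma near_cuts_sorted w k : cuts_sorted w ->
  \forall p \near w k, cuts_sorted (set_price w k p).
Proof.
move=> [s32 s21 s1].
have cvg_price j : set_price w k p j @[p --> w k] --> w j.
  by rewrite /set_price; case: (j =P k) => [->|_]; [exact: cvg_id | exact: cvg_cst].
have cvg3 : theta3 (set_price w k p) @[p --> w k] --> theta3 w.
  by apply: cvgM; [exact: cvg_price | exact: cvg_cst].
have cvg2 : theta2 (set_price w k p) @[p --> w k] --> theta2 w.
  by apply: cvgM; [apply: cvgB; exact: cvg_price | exact: cvg_cst].
have cvg1 : theta1 (set_price w k p) @[p --> w k] --> theta1 w.
  by apply: cvgM; [apply: cvgB; exact: cvg_price | exact: cvg_cst].
near=> p; split; near: p.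
- exact: near_lt_cvg cvg3 cvg2 s32.
- exact: near_lt_cvg cvg2 cvg1 s21.
- exact: near_lt_cvg cvg1 (cvg_cst (1 : R)) s1.
Unshelve. all: by end_near.
Qed.

Definition share_slope (k : 'I_3) : R :=
  if k == cdn3 then (1 - beta cdn3)^-1 + (beta cdn3 - beta cdn2)^-1
  else if k == cdn2 then (beta cdn3 - beta cdn2)^-1 + (beta cdn2 - beta cdn1)^-1
  else (beta cdn2 - beta cdn1)^-1.

Lemma share_slope_gt0 k : 0 < share_slope k.
Proof.
have [? ? ?] := gaps_gt0.
by case: (ord3P k) => ->; rewrite /share_slope /= ?addr_gt0 ?invr_gt0.
Qed.

Lemma share_set_price w k p :
  share (set_price w k p) k = share w k - share_slope k * (p - w k).
Proof.
have [? ? ?] := gaps_gt0.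
case: (ord3P k) => ->;
  rewrite /share /share_slope /theta1 /theta2 /theta3 /set_price /=;
  by field; rewrite !gt_eqF.
Qed.

Lemma nash_share {Lam w} k : 0 < Lam -> nash_eq Lam beta w ->
  (forall j, 0 < demand Lam beta w j) -> share w k = share_slope k * w k.
Proof.
move=> Lam_gt0 [w_ge0 nash] D_gt0.
have sorted_w := cuts_sorted_demand D_gt0.
have w3_ge0 := w_ge0 cdn3.
have share_gt0 : 0 < share w k by rewrite -(pmulr_rgt0 _ Lam_gt0) -demand_share.
apply: quadratic_local_max share_gt0 (share_slope_gt0 k) (w_ge0 k) _.
near=> p => p_ge0.
have p3_ge0 : 0 <= set_price w k p cdn3 by rewrite /set_price; case: eqP.
have := nash k p p_ge0.
rewrite /revenue !demand_share // ?share_set_price; last by near: p; exact: near_cuts_sorted.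
by rewrite /set_price eqxx -!mulrA ler_pM2l // mulrC [share w k * _]mulrC.
Unshelve. all: by end_near.
Qed.

Lemma equilibrium_bounds {Lam w} : 0 < Lam -> nash_eq Lam beta w ->
    (forall k, 0 < demand Lam beta w k) ->
  [/\ demand Lam beta w cdn2 < demand Lam beta w cdn1,
      2 * demand Lam beta w cdn3 < demand Lam beta w cdn2,
      3 / 2 * w cdn2 < w cdn1, 2 * w cdn3 < w cdn2 & 0 < w cdn3].
Proof.
move=> Lam_gt0 nash D_gt0; have [a_gt0 d2_gt0 d1_gt0] := gaps_gt0.
have sorted_w := cuts_sorted_demand D_gt0.
have w3_ge0 : 0 <= w cdn3 by case: nash.
have share3_gt0 : 0 < share w cdn3 by rewrite -(pmulr_rgt0 _ Lam_gt0) -demand_share.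
have foc3 := nash_share cdn3 Lam_gt0 nash D_gt0.
have foc2 := nash_share cdn2 Lam_gt0 nash D_gt0.
have w3_gt0 : 0 < w cdn3.
  by move: share3_gt0; rewrite foc3 pmulr_rgt0 // share_slope_gt0.
rewrite !demand_share // mulrCA !ltr_pM2l // (nash_share cdn1 Lam_gt0 nash D_gt0) foc2 foc3.
case: sorted_w => s32 _ _; move: foc3 foc2 s32.
rewrite /share /share_slope /theta1 /theta2 /theta3 /=.
set u := (1 - beta cdn3)^-1; set e2 := (beta cdn3 - beta cdn2)^-1.
set e1 := (beta cdn2 - beta cdn1)^-1.
have u_gt0 : 0 < u by rewrite invr_gt0.
have e2_gt0 : 0 < e2 by rewrite invr_gt0.
have e1_gt0 : 0 < e1 by rewrite invr_gt0.
move=> foc3 foc2 s32.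
have theta2_gt0 : 0 < (w cdn2 - w cdn3) * e2.
  by apply: le_lt_trans s32; rewrite mulr_ge0 // ltW.
have w32 : 2 * w cdn3 < w cdn2.
  have w2E : e2 * (w cdn2 - 2 * w cdn3) = 2 * u * w cdn3 by lra.
  have uw3_gt0 : 0 < u * w cdn3 by rewrite mulr_gt0.
  by rewrite -subr_gt0 -(pmulr_rgt0 _ e2_gt0) w2E; lra.
have w2_gt0 : 0 < w cdn2 by lra.
have w21 : 2 * w cdn2 < w cdn1.
  have w1E : e1 * (w cdn1 - 2 * w cdn2) = e2 * w cdn2 + (w cdn2 - w cdn3) * e2 by lra.
  have e2w2_gt0 : 0 < e2 * w cdn2 by rewrite mulr_gt0.
  by rewrite -subr_gt0 -(pmulr_rgt0 _ e1_gt0) w1E; lra.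
have : 0 < e1 * w cdn2 by rewrite mulr_gt0.
by split; lra.
Qed.
End Market.

Lemma revenue_ratios (R : realFieldType) (D1 D2 D3 w1 w2 w3 : R) :
  0 < D3 -> D2 < D1 -> 2 * D3 < D2 -> 3 / 2 * w2 < w1 -> 2 * w3 < w2 -> 0 < w3 ->
  D1 > D2 /\ D2 > 2 * D3 /\ w1 > 3 / 2 * w2 /\ 3 / 2 * w2 > 3 * w3 /\
  D2 * w2 >= 4 * (D3 * w3) /\ D1 * w1 >= 6 * (D3 * w3) /\
  D1 * w1 > 3 / 2 * (D2 * w2) /\ 3 / 2 * (D2 * w2) > 6 * (D3 * w3).
Proof.
move=> D3_gt0 D21 D32 w21 w32 w3_gt0.
have J32 : 4 * (D3 * w3) < D2 * w2 by nra.
have J21 : 3 / 2 * (D2 * w2) < D1 * w1 by nra.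
by do !split; lra.
Qed.

Theorem theorem2 (R : realType) (Lam : R) (beta w : 'I_3 -> R) :
  0 < Lam ->
  0 <= beta cdn1 -> beta cdn1 < beta cdn2 -> beta cdn2 < beta cdn3 -> beta cdn3 < 1 ->
  nash_eq Lam beta w ->
  (forall k, 0 < demand Lam beta w k) ->
  demand Lam beta w cdn1 > demand Lam beta w cdn2  /\
  demand Lam beta w cdn2 > 2 * demand Lam beta w cdn3  /\
  w cdn1 > 3 / 2 * w cdn2  /\
  3 / 2 * w cdn2 > 3 * w cdn3  /\
  revenue Lam beta w cdn2 >= 4 * revenue Lam beta w cdn3  /\
  revenue Lam beta w cdn1 >= 6 * revenue Lam beta w cdn3  /\
  revenue Lam beta w cdn1 > 3 / 2 * revenue Lam beta w cdn2 /\
  3 / 2 * revenue Lam beta w cdn2 > 6 * revenue Lam beta w cdn3.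
Proof.
move=> Lam_gt0 _ beta12 beta23 beta3 nash D_gt0.
have [D21 D32 w21 w32 w3_gt0] := equilibrium_bounds beta12 beta23 beta3 Lam_gt0 nash D_gt0.
exact: revenue_ratios (D_gt0 cdn3) D21 D32 w21 w32 w3_gt0.
Qed.
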